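(* Let $a<b$ be real numbers and let $g:[a,b)\to\mathbb{R}$ be a continuous function that is differentiable on $(a,b)$ and has a (finite) right-hand derivative at the point $a$. For every $x\in(a,b)$ let $\xi(x)$ be the supremum of the numbers $\tau\in(a,x]$ such that $g'(\tau)\cdot(x-a)=g(x)-g(a)$. Then $$\varlimsup_{x\to a}\frac{\xi(x)-a}{x-a}\ \geq\ \frac1e.$$
   Context: Limits at $a$ are right-hand limits. *)

From Stdlib Require Import Reals.
From Coquelicot Require Import Coquelicot.
Open Scope R_scope.

(* xi g a x = sup { tau in (a,x] | g'(tau) * (x - a) = g x - g a }.
   For a < x < b the set is nonempty (mean value theorem) and bounded by x,
   so the supremum is a finite real; [real] extracts it from [Rbar]. *)
Definition xi (g : R -> R) (a x : R) : R :=
  real (Lub_Rbar (fun tau => a < tau <= x /\ Derive g tau * (x - a) = g x - g a)).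

Definition limsup_right_ge (f : R -> R) (a b c : R) : Prop :=
  forall eps delta : R, 0 < eps -> 0 < delta ->
    exists x : R, a < x < b /\ x < a + delta /\ c - eps < f x.

(* Suppose the limsup were below 1/e: then for some c < 1/e and all x close to a, no
   t in (a + c (x - a), x] satisfies g'(t) = phi(x), where phi(x) = (g x - g a) / (x - a).
   Taking t = x, phi' = (g' - phi) / (x - a) never vanishes, so by Darboux it has a constant
   sign, say positive (otherwise replace g by -g); Darboux again gives g'(t) > phi(x) on the
   whole window, and letting x increase to a + k (t - a), with k = 1/c > e, gives
   phi(a + k (t - a)) <= g'(t).  For h = phi - l, with l = g'(a+), this reads
   (t - a) h'(t) >= h(a + k (t - a)) - h(t), so G(t) = h(t) - int_t^{a + k (t - a)} h(u)/(u - a) du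
   is nondecreasing.  As h is increasing, the integral lies between h(t) ln k and
   h(a + k (t - a)) ln k; hence G(t) <= h(t) (1 - ln k) < 0, whereas G(s) >= -h(a + k (s - a)) ln k
   tends to 0 as s -> a. *)

From Stdlib Require Import Reals Lra Classical.
From Coquelicot Require Import Coquelicot.
Open Scope R_scope.

Lemma is_derive_continuity_pt (f : R -> R) (x l : R) :
  is_derive f x l -> continuity_pt f x.
Proof.
  intros Hd. apply continuity_pt_filterlim, (ex_derive_continuous (V := R_NormedModule)).
  now exists l.
Qed.

Lemma is_derive_pos_locally (f : R -> R) (x l : R) :
  is_derive f x l -> 0 < l ->
  exists delta, 0 < delta /\ forall h, 0 < h < delta -> f (x - h) < f x < f (x + h).
Proof.
  intros Hd Hpos. apply is_derive_Reals in Hd.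
  destruct (Hd l Hpos) as [delta Hdelta].
  exists delta. split; [apply cond_pos|]. intros h Hh.
  destruct (Rabs_def2 _ _ (Hdelta h ltac:(lra) ltac:(rewrite Rabs_pos_eq; lra)))
    as [_ Hright].
  destruct (Rabs_def2 _ _ (Hdelta (- h) ltac:(lra)
              ltac:(rewrite Rabs_Ropp, Rabs_pos_eq; lra))) as [_ Hleft].
  assert (Hr : 0 < (f (x + h) - f x) / h * h) by (apply Rmult_lt_0_compat; lra).
  assert (Hl : 0 < (f (x + - h) - f x) / - h * h) by (apply Rmult_lt_0_compat; lra).
  replace ((f (x + h) - f x) / h * h) with (f (x + h) - f x) in Hr by (field; lra).
  replace ((f (x + - h) - f x) / - h * h) with (f x - f (x - h)) in Hl
    by (replace (x - h) with (x + - h) by ring; field; lra).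
  lra.
Qed.

Lemma derive_intermediate_value (f df : R -> R) (p q m : R) : p < q ->
  (forall y, p <= y <= q -> is_derive f y (df y)) ->
  df p < m < df q -> exists r, p < r < q /\ df r = m.
Proof.
  intros Hpq Hd Hm.
  set (F := fun y => f y - m * y).
  assert (HF : forall y, p <= y <= q -> is_derive F y (df y - m)).
  { intros y Hy. unfold F. apply (is_derive_minus f (fun y => m * y)); [now apply Hd|].
    auto_derive; [easy | ring]. }
  destruct (continuity_ab_min F p q) as [r [Hmin Hr]]; [lra| |].
  { intros y Hy. exact (is_derive_continuity_pt _ _ _ (HF y Hy)). }
  exists r.
  (* [F'] is negative at [p] and positive at [q], so a minimum of [F] is a critical point *)
  destruct (Rtotal_order (df r) m) as [Hlt | [Heq | Hgt]].
  - exfalso.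
    assert (HFr : is_derive (fun y => - F y) r (- (df r - m)))
      by (apply is_derive_Reals, derivable_pt_lim_opp, is_derive_Reals, HF, Hr).
    destruct (is_derive_pos_locally _ _ _ HFr ltac:(lra)) as [delta [Hdelta Hloc]].
    assert (Hrq : r < q) by (destruct Hr as [_ [Hrq | ->]]; lra).
    set (h := Rmin delta (q - r) / 2).
    assert (Hh1 := Rmin_l delta (q - r)). assert (Hh2 := Rmin_r delta (q - r)).
    assert (Hh0 : 0 < Rmin delta (q - r)) by (apply Rmin_glb_lt; lra).
    destruct (Hloc h ltac:(unfold h; lra)) as [_ Hrh].
    specialize (Hmin (r + h) ltac:(unfold h; lra)). lra.
  - split; [|exact Heq].
    destruct Hr as [[Hp | <-] [Hq | ->]]; lra.
  - exfalso.
    destruct (is_derive_pos_locally F r (df r - m) (HF r Hr) ltac:(lra))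
      as [delta [Hdelta Hloc]].
    assert (Hpr : p < r) by (destruct Hr as [[Hpr | <-] _]; lra).
    set (h := Rmin delta (r - p) / 2).
    assert (Hh1 := Rmin_l delta (r - p)). assert (Hh2 := Rmin_r delta (r - p)).
    assert (Hh0 : 0 < Rmin delta (r - p)) by (apply Rmin_glb_lt; lra).
    destruct (Hloc h ltac:(unfold h; lra)) as [Hrh _].
    specialize (Hmin (r - h) ltac:(unfold h; lra)). lra.
Qed.

Lemma derive_no_cross (f df : R -> R) (p q m : R) : p <= q ->
  (forall y, p <= y <= q -> is_derive f y (df y)) ->
  (forall y, p <= y <= q -> df y <> m) ->
  (m < df p <-> m < df q).
Proof.
  intros Hpq Hd Hne.
  assert (Hp := Hne p ltac:(lra)). assert (Hq := Hne q ltac:(lra)).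
  destruct Hpq as [Hpq | <-]; [|tauto].
  split; intros Hm.
  - destruct (Rlt_or_le m (df q)) as [Hmq | Hqm]; [easy | exfalso].
    destruct (derive_intermediate_value (fun y => - f y) (fun y => - df y) p q (- m))
      as [r [Hr Er]]; [easy | | lra |].
    + intros y Hy. apply is_derive_Reals, derivable_pt_lim_opp, is_derive_Reals, Hd, Hy.
    + apply (Hne r); lra.
  - destruct (Rlt_or_le m (df p)) as [Hmp | Hpm]; [easy | exfalso].
    destruct (derive_intermediate_value f df p q m) as [r [Hr Er]]; [easy | easy | lra |].
    apply (Hne r); lra.
Qed.

Lemma derive_no_cross_open (f df : R -> R) (u v m : R) :
  (forall y, u < y < v -> is_derive f y (df y)) ->
  (forall y, u < y < v -> df y <> m) ->
  forall y z, u < y < v -> u < z < v -> (m < df y <-> m < df z).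
Proof.
  intros Hd Hne y z Hy Hz.
  destruct (Rle_or_lt y z) as [Hyz | Hzy].
  - apply (derive_no_cross f); [easy | |]; intros w Hw; [apply Hd | apply Hne]; lra.
  - symmetry. apply (derive_no_cross f); [lra | |]; intros w Hw; [apply Hd | apply Hne]; lra.
Qed.

Lemma nondecreasing_of_derive_nonneg (f df : R -> R) (p q : R) : p <= q ->
  (forall y, p <= y <= q -> is_derive f y (df y)) ->
  (forall y, p <= y <= q -> 0 <= df y) -> f p <= f q.
Proof.
  intros Hpq Hd Hpos.
  destruct (MVT_gen f p q df) as [r [Hr Er]];
    rewrite ?Rmin_left, ?Rmax_right in *; try easy.
  - intros y Hy. apply Hd. lra.
  - intros y Hy. exact (is_derive_continuity_pt _ _ _ (Hd y Hy)).
  - assert (0 <= df r * (q - p)) by (apply Rmult_le_pos; [apply Hpos, Hr | lra]). lra.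
Qed.

Lemma continuous_le_from_left (f : R -> R) (t T C : R) : t < T ->
  continuity_pt f T -> (forall x, t < x < T -> f x <= C) -> f T <= C.
Proof.
  intros HtT Hc Hle.
  apply (filterlim_le (F := at_left T) f (fun _ => C) (f T) C).
  - exists (mkposreal _ (proj2 (Rlt_0_minus _ _) HtT)). intros x Hx HxT. apply Hle.
    change (Rabs (x - T) < T - t) in Hx. apply Rabs_def2 in Hx. lra.
  - apply (filterlim_filter_le_1 _ (filter_le_within _)), continuity_pt_filterlim, Hc.
  - apply filterlim_const.
Qed.

Lemma nondecreasing_ge_right_limit (f : R -> R) (a b l : R) :
  (forall s t, a < s -> s <= t < b -> f s <= f t) ->
  filterlim f (at_right a) (locally l) -> forall t, a < t < b -> l <= f t.
Proof.
  intros Hmono Hlim t Ht.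
  apply (filterlim_le (F := at_right a) f (fun _ => f t) l (f t)); [| easy |].
  - exists (mkposreal _ (proj2 (Rlt_0_minus _ _) (proj1 Ht))).
    intros s Hs Has. apply Hmono; [easy |].
    change (Rabs (s - a) < t - a) in Hs. apply Rabs_def2 in Hs. lra.
  - apply filterlim_const.
Qed.

Lemma Lub_Rbar_real_ge (E : R -> Prop) (M t : R) :
  (forall s, E s -> s <= M) -> E t -> t <= real (Lub_Rbar E).
Proof.
  intros Hub Ht. destruct (Lub_Rbar_correct E) as [Hlub Hleast].
  assert (Hle := Hlub t Ht).
  assert (HleM : Rbar_le (Lub_Rbar E) M) by (apply Hleast; intros s Hs; apply Hub, Hs).
  destruct (Lub_Rbar E); simpl in *; tauto.
Qed.

Section Growth.

Variables (a d k l : R) (h dh : R -> R).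
Hypothesis k_gt_e : exp 1 < k.
Hypothesis h_derive : forall t, a < t < a + d -> is_derive h t (dh t).
Hypothesis h_nondecreasing : forall s t, a < s -> s <= t < a + d -> h s <= h t.
Hypothesis h_lim : filterlim h (at_right a) (locally l).
Hypothesis h_growth : forall t, a < t -> a + k * (t - a) < a + d ->
  h (a + k * (t - a)) - h t <= (t - a) * dh t.

Let q u := (h u - l) / (u - a).
Let P y := RInt q (a + d / 2) y.
(* [G] is nondecreasing by [h_growth], while [P_increment_bounds] makes [G t0 - l] negative
   if [h t0 > l] and bounds [G s - l] below by [- (h (a + k (s - a)) - l) * ln k]. *)
Let G t := h t - (P (a + k * (t - a)) - P t).

Lemma one_lt_ln_k : 1 < ln k.
Proof. rewrite <- ln_exp at 1. apply ln_increasing; [apply exp_pos | easy]. Qed.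

Lemma one_lt_k : 1 < k.
Proof. pose proof (exp_ineq1 1 ltac:(lra)). lra. Qed.

Lemma lt_dilate t : a < t -> t < a + k * (t - a).
Proof. intros Ht. pose proof one_lt_k. nra. Qed.

Lemma is_derive_P y : a < y < a + d -> is_derive P y (q y).
Proof.
  intros Hy.
  assert (Hq : forall u, a < u < a + d -> continuous q u).
  { intros u Hu. apply (ex_derive_continuous (V := R_NormedModule)). unfold q.
    auto_derive. split; [exists (dh u); apply h_derive, Hu | lra]. }
  apply (is_derive_RInt q P (a + d / 2) y); [| apply Hq, Hy].
  assert (Hr : 0 < Rmin (y - a) (a + d - y)) by (apply Rmin_glb_lt; lra).
  exists (mkposreal _ Hr). intros u Hu.
  change (Rabs (u - y) < Rmin (y - a) (a + d - y)) in Hu.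
  assert (Hr1 := Rmin_l (y - a) (a + d - y)). assert (Hr2 := Rmin_r (y - a) (a + d - y)).
  apply Rabs_def2 in Hu.
  apply (RInt_correct (V := R_CompleteNormedModule)),
    (ex_RInt_continuous (V := R_CompleteNormedModule)).
  intros z Hz. apply Hq.
  unfold Rmin, Rmax in Hz. destruct (Rle_dec _ _) in Hz; lra.
Qed.

Lemma P_increment_bounds t : a < t -> a + k * (t - a) < a + d ->
  (h t - l) * ln k <= P (a + k * (t - a)) - P t <= (h (a + k * (t - a)) - l) * ln k.
Proof.
  intros Ht HT. assert (HtT := lt_dilate t Ht). set (T := a + k * (t - a)) in *.
  assert (HlnT : ln (T - a) = ln k + ln (t - a)).
  { unfold T. replace (a + k * (t - a) - a) with (k * (t - a)) by ring.
    apply ln_mult; [pose proof exp_pos 1 |]; lra. }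
  assert (HP : forall y, t <= y <= T -> is_derive P y (q y))
    by (intros y Hy; apply is_derive_P; lra).
  (* compare [P] on [[t, T]] with [C * ln (y - a)], for [C = h t - l] and [C = h T - l] *)
  assert (Hln : forall C y, t <= y <= T -> is_derive (fun y => C * ln (y - a)) y (C / (y - a))).
  { intros C y Hy. auto_derive; [lra | field; lra]. }
  split.
  - assert (Hmono : P t - (h t - l) * ln (t - a) <= P T - (h t - l) * ln (T - a)).
    { apply (nondecreasing_of_derive_nonneg (fun y => P y - (h t - l) * ln (y - a))
               (fun y => q y - (h t - l) / (y - a)) t T); [lra | |].
      - intros y Hy. apply (is_derive_minus P); [apply HP | apply Hln]; exact Hy.
      - intros y Hy. unfold q.
        replace ((h y - l) / (y - a) - (h t - l) / (y - a)) with ((h y - h t) / (y - a))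
          by (field; lra).
        assert (h t <= h y) by (apply h_nondecreasing; lra). apply Rdiv_le_0_compat; lra. }
    rewrite HlnT in Hmono. lra.
  - assert (Hmono : (h T - l) * ln (t - a) - P t <= (h T - l) * ln (T - a) - P T).
    { apply (nondecreasing_of_derive_nonneg (fun y => (h T - l) * ln (y - a) - P y)
               (fun y => (h T - l) / (y - a) - q y) t T); [lra | |].
      - intros y Hy. apply (is_derive_minus _ P); [apply Hln | apply HP]; exact Hy.
      - intros y Hy. unfold q.
        replace ((h T - l) / (y - a) - (h y - l) / (y - a)) with ((h T - h y) / (y - a))
          by (field; lra).
        assert (h y <= h T) by (apply h_nondecreasing; lra). apply Rdiv_le_0_compat; lra. }
    rewrite HlnT in Hmono. lra.
Qed.

Lemma G_nondecreasing s t : a < s -> s <= t -> a + k * (t - a) < a + d -> G s <= G t.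
Proof.
  intros Hs Hst Ht.
  assert (Hk := one_lt_k).
  apply (nondecreasing_of_derive_nonneg G
           (fun y => dh y - (k * q (a + k * (y - a)) - q y)) s t Hst).
  - intros y Hy.
    assert (Hdil : a + k * (y - a) < a + d) by nra.
    assert (HyT := lt_dilate y ltac:(lra)).
    apply (is_derive_minus h (fun y => P (a + k * (y - a)) - P y)); [apply h_derive; lra |].
    apply (is_derive_minus (fun y => P (a + k * (y - a))) P); [| apply is_derive_P; lra].
    apply (is_derive_comp P (fun y => a + k * (y - a))); [apply is_derive_P; lra |].
    auto_derive; [easy | ring].
  - intros y Hy.
    assert (Hdil : a + k * (y - a) < a + d) by nra.
    replace (dh y - (k * q (a + k * (y - a)) - q y))
      with (((y - a) * dh y - (h (a + k * (y - a)) - h y)) / (y - a))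
      by (unfold q; replace (a + k * (y - a) - a) with (k * (y - a)) by ring;
          field; repeat split; nra).
    assert (Hg := h_growth y ltac:(lra) Hdil). apply Rdiv_le_0_compat; lra.
Qed.

Theorem le_right_limit_of_growth t0 : a < t0 -> a + k * (t0 - a) < a + d -> h t0 <= l.
Proof.
  intros Ht0 HT0.
  assert (Hk := one_lt_k).
  assert (Hlnk := one_lt_ln_k).
  assert (Ht0T := lt_dilate t0 Ht0).
  assert (h_ge_l : forall u, a < u < a + d -> l <= h u)
    by exact (nondecreasing_ge_right_limit h a (a + d) l h_nondecreasing h_lim).
  assert (HG0 : G t0 - l <= (h t0 - l) * (1 - ln k)).
  { destruct (P_increment_bounds t0 Ht0 HT0) as [Hlow _]. unfold G. lra. }
  assert (HG_lower : forall u, a < u < a + k * (t0 - a) -> l - (G t0 - l) / ln k <= h u).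
  { (* compare [G t0] with [G s], where [s] is dilated onto [u] *)
    intros u Hu.
    set (s := a + (u - a) / k).
    assert (Hs : a + k * (s - a) = u) by (unfold s; field; lra).
    assert (Has : a < s).
    { unfold s. assert (0 < (u - a) / k) by (apply Rdiv_lt_0_compat; lra). lra. }
    assert (Hst0 : s <= t0) by (apply Rlt_le, (Rmult_lt_reg_l k); lra).
    assert (HGs := G_nondecreasing s t0 Has Hst0 HT0).
    destruct (P_increment_bounds s Has ltac:(rewrite Hs; lra)) as [_ Hup].
    assert (Hhs := h_ge_l s ltac:(lra)).
    unfold G at 1 in HGs. rewrite Hs in HGs, Hup.
    assert (l - G t0 <= (h u - l) * ln k) by lra.
    apply (Rmult_le_reg_r (ln k)); [lra |].
    replace ((l - (G t0 - l) / ln k) * ln k) with (l * ln k - (G t0 - l)) by (field; lra).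
    lra. }
  assert (Hlim_le : l - (G t0 - l) / ln k <= l).
  { apply (filterlim_le (F := at_right a) (fun _ => l - (G t0 - l) / ln k) h
             (l - (G t0 - l) / ln k) l); [| apply filterlim_const | easy].
    assert (Hr : 0 < k * (t0 - a)) by nra.
    exists (mkposreal _ Hr). intros u Hu Hau. apply HG_lower.
    change (Rabs (u - a) < k * (t0 - a)) in Hu. apply Rabs_def2 in Hu. lra. }
  assert (0 <= G t0 - l).
  { apply (Rmult_le_reg_r (/ ln k)); [apply Rinv_0_lt_compat; lra |].
    unfold Rdiv in Hlim_le. lra. }
  nra.
Qed.

End Growth.

Definition slope (g : R -> R) (a y : R) : R := (g y - g a) / (y - a).

Definition slope_deriv (g : R -> R) (a y : R) : R := (Derive g y - slope g a y) / (y - a).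

Lemma is_derive_slope (g : R -> R) (a y : R) : a < y -> ex_derive g y ->
  is_derive (slope g a) y (slope_deriv g a y).
Proof.
  intros Hy Hg. unfold slope_deriv, slope. auto_derive.
  - repeat split; [exact Hg | lra].
  - change (Derive (fun x => g x) y) with (Derive g y). field. lra.
Qed.

Lemma slope_opp (g : R -> R) (a y : R) : slope (fun x => - g x) a y = - slope g a y.
Proof. unfold slope, Rdiv. ring. Qed.

Lemma slope_deriv_opp (g : R -> R) (a y : R) :
  slope_deriv (fun x => - g x) a y = - slope_deriv g a y.
Proof. unfold slope_deriv. rewrite Derive_opp, slope_opp. unfold Rdiv. ring. Qed.

Lemma slope_deriv_eq0 (g : R -> R) (a y : R) : a < y ->
  slope_deriv g a y = 0 -> Derive g y = slope g a y.
Proof.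
  unfold slope_deriv. intros Hy H0.
  replace (Derive g y) with ((Derive g y - slope g a y) / (y - a) * (y - a) + slope g a y)
    by (field; lra).
  rewrite H0. ring.
Qed.

Lemma slope_deriv_pos (g : R -> R) (a y : R) : a < y ->
  0 < slope_deriv g a y -> slope g a y < Derive g y.
Proof.
  unfold slope_deriv. intros Hy Hpos.
  assert (0 < (Derive g y - slope g a y) / (y - a) * (y - a))
    by (apply Rmult_lt_0_compat; lra).
  replace ((Derive g y - slope g a y) / (y - a) * (y - a)) with (Derive g y - slope g a y)
    in H by (field; lra).
  lra.
Qed.

Lemma lt_1_of_lt_inv_exp1 (c : R) : c < / exp 1 -> c < 1.
Proof.
  intros Hc. pose proof (exp_ineq1 1 ltac:(lra)).
  assert (/ exp 1 < / 1) by (apply Rinv_lt_contravar; lra). rewrite Rinv_1 in H0. lra.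
Qed.

Section EarlyMeanValuePoints.

Variables (a d c l : R) (g : R -> R).
Hypothesis d_pos : 0 < d.
Hypothesis c_pos : 0 < c.
Hypothesis c_lt_inv_e : c < / exp 1.
Hypothesis g_derive : forall y, a < y < a + d -> ex_derive g y.
Hypothesis slope_lim : filterlim (slope g a) (at_right a) (locally l).

Lemma slope_lt_derive_absurd :
  (forall x t, a < x < a + d -> a + c * (x - a) < t <= x -> slope g a x < Derive g t) ->
  False.
Proof.
  intros Hlt.
  assert (Hc1 := lt_1_of_lt_inv_exp1 c c_lt_inv_e).
  set (k := / c).
  assert (Hck : c * k = 1) by (unfold k; field; lra).
  assert (Hk : exp 1 < k).
  { rewrite <- (Rinv_inv (exp 1)). apply Rinv_lt_contravar; [| easy].
    apply Rmult_lt_0_compat; [easy | apply Rinv_0_lt_compat, exp_pos]. }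
  assert (Hk1 : 1 < k) by nra.
  assert (Hderiv : forall y, a < y < a + d -> is_derive (slope g a) y (slope_deriv g a y))
    by (intros y Hy; apply is_derive_slope, g_derive; lra).
  assert (Hpos : forall y, a < y < a + d -> 0 < slope_deriv g a y).
  { intros y Hy. unfold slope_deriv. apply Rdiv_lt_0_compat; [| lra].
    apply Rlt_0_minus, Hlt; nra. }
  assert (Hincr : forall s t, a < s -> s < t < a + d -> slope g a s < slope g a t).
  { intros s t Hs Ht.
    apply (incr_function (slope g a) a (a + d) (slope_deriv g a)); simpl; try lra.
    - intros y Hay Hyd. apply Hderiv. lra.
    - intros y Hay Hyd. apply Hpos. lra. }
  assert (Hgrowth : forall t, a < t -> a + k * (t - a) < a + d ->
    slope g a (a + k * (t - a)) - slope g a t <= (t - a) * slope_deriv g a t).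
  { intros t Ht HT.
    replace ((t - a) * slope_deriv g a t) with (Derive g t - slope g a t)
      by (unfold slope_deriv; field; lra).
    enough (slope g a (a + k * (t - a)) <= Derive g t) by lra.
    assert (HtT : t < a + k * (t - a)) by nra.
    (* every [x] in [(t, a + k (t - a))] has [t] in its window [(a + c (x - a), x]] *)
    apply (continuous_le_from_left _ t); [easy | |].
    - apply (is_derive_continuity_pt _ _ _ (Hderiv (a + k * (t - a)) ltac:(lra))).
    - intros x Hx.
      assert (c * (x - a) < c * (k * (t - a))) by (apply Rmult_lt_compat_l; lra).
      apply Rlt_le, Hlt; nra. }
  assert (Hmono : forall s t, a < s -> s <= t < a + d -> slope g a s <= slope g a t).
  { intros s t Hs [[Hst | <-] Ht]; [apply Rlt_le, Hincr | apply Rle_refl]; lra. }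
  set (t0 := a + d / (2 * k)).
  assert (Ht0 : 0 < d / (2 * k)) by (apply Rdiv_lt_0_compat; lra).
  assert (HT0 : k * (t0 - a) = d / 2) by (unfold t0; field; lra).
  assert (Hle := le_right_limit_of_growth a d k l (slope g a) (slope_deriv g a)
                   Hk Hderiv Hmono slope_lim Hgrowth t0 ltac:(unfold t0; lra)
                   ltac:(rewrite HT0; lra)).
  assert (Hge := nondecreasing_ge_right_limit (slope g a) a (a + d) l Hmono slope_lim
                   ((a + t0) / 2) ltac:(unfold t0 in *; nra)).
  assert (slope g a ((a + t0) / 2) < slope g a t0) by (apply Hincr; unfold t0 in *; nra).
  lra.
Qed.

Lemma derive_ne_slope_absurd :
  (forall x t, a < x < a + d -> a + c * (x - a) < t <= x -> Derive g t <> slope g a x) ->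
  0 < slope_deriv g a (a + d / 2) -> False.
Proof.
  intros Hne Hpos0. apply slope_lt_derive_absurd.
  assert (Hc1 := lt_1_of_lt_inv_exp1 c c_lt_inv_e).
  assert (Hderiv : forall y, a < y < a + d -> is_derive (slope g a) y (slope_deriv g a y))
    by (intros y Hy; apply is_derive_slope, g_derive; lra).
  assert (Hne0 : forall y, a < y < a + d -> slope_deriv g a y <> 0).
  { intros y Hy H0. apply (Hne y y); [easy | nra | now apply slope_deriv_eq0]. }
  assert (Hpos : forall y, a < y < a + d -> 0 < slope_deriv g a y).
  { intros y Hy.
    apply (derive_no_cross_open _ _ a (a + d) 0 Hderiv Hne0 y (a + d / 2)); lra. }
  intros x t Hx Ht.
  apply (derive_no_cross g (Derive g) t x (slope g a x)); [lra | | |].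
  - intros y Hy. apply Derive_correct, g_derive. nra.
  - intros y Hy. apply Hne; lra.
  - apply slope_deriv_pos, Hpos; lra.
Qed.

End EarlyMeanValuePoints.

Lemma early_mean_value_points_absurd (a d c l : R) (g : R -> R) :
  0 < d -> 0 < c -> c < / exp 1 ->
  (forall y, a < y < a + d -> ex_derive g y) ->
  filterlim (slope g a) (at_right a) (locally l) ->
  (forall x t, a < x < a + d -> a + c * (x - a) < t <= x -> Derive g t <> slope g a x) ->
  False.
Proof.
  intros Hd Hc Hce Hg Hlim Hne.
  destruct (Rtotal_order (slope_deriv g a (a + d / 2)) 0) as [Hneg | [H0 | Hpos]].
  - (* the mirror image [- g] has the opposite slopes and derivatives *)
    apply (derive_ne_slope_absurd a d c (- l) (fun x => - g x)); try easy.
    + intros y Hy. apply (ex_derive_opp (V := R_NormedModule)), Hg, Hy.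
    + apply (filterlim_ext (fun y => - slope g a y)); [intros y; now rewrite slope_opp |].
      apply (filterlim_comp _ _ _ (slope g a) Ropp _ (locally l)); [easy |].
      apply (filterlim_opp (V := R_NormedModule)).
    + intros x t Hx Ht. rewrite Derive_opp, slope_opp.
      intros E. apply (Hne x t Hx Ht). lra.
    + rewrite slope_deriv_opp. lra.
  - apply (Hne (a + d / 2) (a + d / 2)); [lra | | now apply slope_deriv_eq0; [lra |]].
    assert (Hc1 := lt_1_of_lt_inv_exp1 c Hce). split; nra.
  - exact (derive_ne_slope_absurd a d c l g Hd Hc Hce Hg Hlim Hne Hpos).
Qed.

Lemma xi_ge (g : R -> R) (a x t : R) : a < t <= x ->
  Derive g t = slope g a x -> t <= xi g a x.
Proof.
  intros Ht E. apply (Lub_Rbar_real_ge _ x); [intros s [Hs _]; lra |].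
  split; [easy |]. rewrite E. unfold slope. field. lra.
Qed.

Theorem corollary1 (a b : R) (g : R -> R)
  (Hab : a < b)
  (Hcont_a : filterlim g (at_right a) (locally (g a)))
  (Hcont : forall x, a < x < b -> continuous g x)
  (Hderiv : forall x, a < x < b -> ex_derive g x)
  (Hright : exists l : R,
      filterlim (fun x => (g x - g a) / (x - a)) (at_right a) (locally l)) :
  limsup_right_ge (fun x => (xi g a x - a) / (x - a)) a b (/ exp 1).
Proof.
  intros eps delta Heps Hdelta.
  destruct Hright as [l Hl].
  apply NNPP. intros Hno.
  assert (He : 0 < / exp 1) by apply Rinv_0_lt_compat, exp_pos.
  set (c := Rmax (/ exp 1 - eps) (/ exp 1 / 2)).
  assert (Hc_eps : / exp 1 - eps <= c) by apply Rmax_l.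
  assert (Hc_half : / exp 1 / 2 <= c) by apply Rmax_r.
  assert (Hc_lt : c < / exp 1) by (apply Rmax_lub_lt; lra).
  set (d := Rmin (b - a) delta).
  assert (Hd_b : d <= b - a) by apply Rmin_l.
  assert (Hd_delta : d <= delta) by apply Rmin_r.
  assert (Hd : 0 < d) by (apply Rmin_glb_lt; lra).
  apply (early_mean_value_points_absurd a d c l g Hd ltac:(lra) Hc_lt); [| exact Hl |].
  - intros y Hy. apply Hderiv. lra.
  - intros x t Hx Ht E. apply Hno. exists x. do 2 (split; [lra |]).
    assert (0 < c * (x - a)) by (apply Rmult_lt_0_compat; lra).
    assert (Hxi := xi_ge g a x t ltac:(lra) E).
    apply (Rmult_lt_reg_r (x - a)); [lra |].
    replace ((xi g a x - a) / (x - a) * (x - a)) with (xi g a x - a) by (field; lra).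
    assert ((/ exp 1 - eps) * (x - a) <= c * (x - a)) by (apply Rmult_le_compat_r; lra).
    lra.
Qed.
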